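(* Let $T$ be a tree, let $f_t$ be a token-placement of $T$ with colors $\{1,2\}$ and let $f$ be a token-placement of $T$ with the same number of color-1 tokens as $f_t$. For an edge $e=xy$ of $T$, let $T(x)$ and $T(y)$ be the components of $T-e$ containing $x$ and $y$, and let $\mathrm{diff}_f(e)=\bigl|\,|\{v\in T(x): f(v)=1\}|-|\{v\in T(x): f_t(v)=1\}|\,\bigr|$. Let $D(f)=\sum_{e\in E(T)}\mathrm{diff}_f(e)$. If $D(f)\neq 0$, then there is an edge $uv$ of $T$ such that the token-placement $f'$ obtained from $f$ by swapping the tokens on $u$ and $v$ satisfies $D(f')=D(f)-1$.
   Context: A token-placement of a graph with color set $\{1,2\}$ is a surjective map from its vertex set to $\{1,2\}$. Swapping the tokens on adjacent vertices $u,v$ turns $f$ into $f'$ with $f'(u)=f(v)$, $f'(v)=f(u)$, $f'(w)=f(w)$ otherwise. Note $\mathrm{diff}_f(e)$ does not depend on which endpoint's side is used. *)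

From mathcomp Require Import all_boot all_order all_algebra.
Set Implicit Arguments. Unset Strict Implicit. Unset Printing Implicit Defensive.

Definition simple_graph (T : finType) (e : rel T) : Prop :=
  symmetric e /\ irreflexive e.

Definition has_cycle (T : finType) (e : rel T) : Prop :=
  exists (x : T) (p : seq T),
    [/\ 2 <= size p, uniq (x :: p), path e x p & e (last x p) x].

Definition is_tree (T : finType) (e : rel T) : Prop :=
  [/\ simple_graph e, (forall x y : T, connect e x y) & ~ has_cycle e].

Definition token_placement (T : finType) (f : T -> nat) : Prop :=
  (forall v, (f v == 1) || (f v == 2)) /\
  (exists v, f v = 1) /\ (exists v, f v = 2).

Definition ones (T : finType) (f : T -> nat) (A : {set T}) : nat :=
  #|[set v in A | f v == 1]|.

Definition remove_edge (T : finType) (e : rel T) (x y : T) : rel T :=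
  fun a b => e a b && ~~ (((a == x) && (b == y)) || ((a == y) && (b == x))).

Definition side (T : finType) (e : rel T) (x y : T) : {set T} :=
  [set w | connect (remove_edge e x y) x w].

Definition diffe (T : finType) (e : rel T) (ft f : T -> nat) (x y : T) : nat :=
  let a := ones f (side e x y) in let b := ones ft (side e x y) in
  ((a - b) + (b - a))%N.

(* D(f) = sum over edges (each unordered edge counted once). *)
Definition Dsum (T : finType) (e : rel T) (ft f : T -> nat) : nat :=
  \sum_(p : T * T | e p.1 p.2 && (enum_rank p.1 < enum_rank p.2)%N)
     diffe e ft f p.1 p.2.

Definition swap (T : finType) (f : T -> nat) (u v : T) : T -> nat :=
  fun w => if w == u then f v else if w == v then f u else f w.

From mathcomp Require Import all_boot all_order all_algebra perm.
Set Implicit Arguments. Unset Strict Implicit. Unset Printing Implicit Defensive.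
Import Order.TTheory GRing.Theory Num.Theory.
Local Open Scope ring_scope.

(* For an edge xy let surplus f x y be the signed difference
   ones f (T(x)) - ones ft (T(x)), so that diff_f(xy) = |surplus f x y|; since
   f and ft have the same number of 1s, surplus f x y = - surplus f y x, and
   surplus f y x is the excess at y plus the surpluses of the edges zy
   hanging below y. Starting from an edge with positive surplus one can
   therefore walk through ever smaller subtrees, first to an edge of positive
   surplus whose tail carries a 1 and then to an edge uv of positive surplus
   with f u = 1 and f v <> 1. Swapping the tokens
   on u and v moves one 1 from T(u) to T(v): the surplus of uv drops by one,
   while every other edge has u and v on the same side and is unaffected. *)

Lemma connect_forward_ind (T : finType) (r : rel T) (P : T -> Prop) x w :
  (forall a b, P a -> r a b -> P b) -> P x -> connect r x w -> P w.
Proof.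
move=> closedP Px /connectP [p r_p ->]; elim: p x Px r_p => [|a p IHp] x Px //=.
by case/andP=> r_xa r_p; apply: IHp r_p; apply: closedP r_xa.
Qed.

Lemma sumr_gt0_exists (R : realDomainType) (I : finType) (P : pred I) (F : I -> R) :
  0 < \sum_(i | P i) F i -> exists2 i, P i & 0 < F i.
Proof.
move=> sum_gt0; case: (pickP (fun i => P i && (0 < F i))) => [i /andP [] | none].
  by exists i.
suff : \sum_(i | P i) F i <= 0 by rewrite leNgt sum_gt0.
by apply: sumr_le0 => i Pi; move: (none i); rewrite Pi /= leNgt => ->.
Qed.

Lemma gtz0_abszB1 (m : int) : 0 < m -> (`|m - 1|%N).+1 = `|m|%N.
Proof. by case: m => // [[|m]] _ //=; rewrite subSS subn0. Qed.

Lemma distn_subn (a b : nat) : (a - b + (b - a))%N = `|a%:Z - b%:Z|%N.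
Proof.
case: (leqP a b) => [le_ab | /ltnW le_ba].
  by move: (le_ab); rewrite -subn_eq0 => /eqP ->; rewrite add0n distnEr.
by move: (le_ba); rewrite -subn_eq0 => /eqP ->; rewrite addn0 distnEl.
Qed.

Lemma ones_sum (T : finType) (f : T -> nat) (S : {set T}) :
  (ones f S)%:Z = \sum_(w in S) (f w == 1%N)%:Z.
Proof.
rewrite /ones -sum1_card (big_morph Posz PoszD (erefl 0%:Z)).
rewrite [RHS]big_mkcond [LHS]big_mkcond; apply: eq_bigr => w _.
by rewrite !inE; case: (w \in S); case: (f w == 1%N).
Qed.

Lemma sum_indicator (T : finType) (S : {set T}) u :
  \sum_(w in S) (w == u)%:Z = (u \in S)%:Z.
Proof.
case: (boolP (u \in S)) => [u_in | u_notin].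
  by rewrite (bigD1 u) //= eqxx big1 ?addr0 // => w /andP [_ /negbTE ->].
by rewrite big1 // => w w_in; case: eqVneq w_in => // ->; rewrite (negbTE u_notin).
Qed.

Lemma swapE (T : finType) (f : T -> nat) u v : swap f u v =1 f \o tperm u v.
Proof.
move=> w; rewrite /swap /=.
case: tpermP => [->|->|/eqP/negbTE-> /eqP/negbTE->]; rewrite ?eqxx //.
by case: eqVneq => [->|].
Qed.

Lemma ones_swap (T : finType) (f : T -> nat) u v :
  ones (swap f u v) [set: T] = ones f [set: T].
Proof.
rewrite /ones -[RHS](card_preimset _ (@perm_inj _ (tperm u v))).
by apply: eq_card => w; rewrite !inE swapE.
Qed.

Lemma remove_edgeC (T : finType) (e : rel T) x y :
  remove_edge e x y =2 remove_edge e y x.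
Proof.
move=> a b; rewrite /remove_edge; congr (_ && _).
by case: (a == x) (b == x) (a == y) (b == y) => [] [] [] [].
Qed.

Lemma remove_edge_sub (T : finType) (e : rel T) x y : subrel (remove_edge e x y) e.
Proof. by move=> a b /andP []. Qed.

Section Tree.
Variables (T : finType) (e : rel T).
Hypotheses (e_sym : symmetric e) (e_irr : irreflexive e).
Hypotheses (e_conn : forall x y : T, connect e x y) (e_acyclic : ~ has_cycle e).

Lemma remove_edge_sym x y : symmetric (remove_edge e x y).
Proof.
move=> a b; rewrite /remove_edge e_sym; congr (_ && _).
by case: (a == x) (b == x) (a == y) (b == y) => [] [] [] [].
Qed.

Lemma remove_edge_disconnects u v : e u v -> ~~ connect (remove_edge e u v) u v.
Proof.
move=> e_uv; apply/negP => /connectP [p r_p last_p].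
case: (shortenP r_p) last_p => {r_p}p r_p uniq_p _ last_p.
case: p r_p uniq_p last_p => [|a [|b q]] /=.
- by move=> _ _ eq_vu; move: e_uv; rewrite eq_vu e_irr.
- by rewrite andbT /remove_edge => + _ eq_va; rewrite -eq_va !eqxx andbF.
move=> /and3P [r_ua r_ab r_q] uniq_p last_p; apply: e_acyclic.
exists u, [:: a, b & q]; split => //=; last by rewrite -last_p e_sym.
rewrite !(remove_edge_sub r_ua, remove_edge_sub r_ab) /=.
exact: sub_path (@remove_edge_sub T e u v) _ _ r_q.
Qed.

Definition avoiding y := [rel a b | [&& e a b, a != y & b != y]].

Lemma avoiding_sub_remove_edge x y a b : avoiding y a b -> remove_edge e x y a b.
Proof.
case/and3P=> e_ab a_y b_y; rewrite /remove_edge e_ab /=.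
by rewrite (negbTE a_y) (negbTE b_y) !andbF.
Qed.

Lemma connect_avoiding_remove_edge x y a b :
  connect (avoiding y) a b -> connect (remove_edge e x y) a b.
Proof.
by apply: connect_sub => c d /(avoiding_sub_remove_edge x) /connect1.
Qed.

Lemma side_refl x y : x \in side e x y.
Proof. by rewrite inE connect0. Qed.

Lemma side_closed x y a b :
  a \in side e x y -> remove_edge e x y a b -> b \in side e x y.
Proof. by rewrite !inE => x_a r_ab; apply: connect_trans x_a (connect1 r_ab). Qed.

Lemma side_same x y u v :
  remove_edge e x y u v -> (u \in side e x y) = (v \in side e x y).
Proof.
move=> r_uv; apply/idP/idP => [u_in | v_in]; first exact: side_closed r_uv.
by apply: side_closed v_in _; rewrite remove_edge_sym.
Qed.

Lemma side_connect_avoiding y z w :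
  e z y -> w \in side e z y -> connect (avoiding y) z w.
Proof.
move=> e_zy; rewrite inE.
have no_y c : connect (avoiding y) z c -> c != y.
  apply: contraTneq => ->; apply: contra (remove_edge_disconnects e_zy).
  exact: connect_avoiding_remove_edge.
apply: (connect_forward_ind (P := connect (avoiding y) z)) (connect0 _ _).
move=> a b z_a r_ab.
apply: (connect_trans z_a); apply: connect1.
rewrite /= (remove_edge_sub r_ab) no_y //=.
apply: contraNneq (remove_edge_disconnects e_zy) => eq_by; subst b.
exact: connect_trans (connect_avoiding_remove_edge z z_a) (connect1 r_ab).
Qed.

Lemma side_cover x y w : e x y -> (w \in side e x y) || (w \in side e y x).
Proof.
move=> e_xy; apply: (connect_forward_ind
  (P := fun w => (w \in side e x y) || (w \in side e y x))) (e_conn y w);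
  last by rewrite side_refl orbT.
move=> a b /orP [] a_in e_ab.
  case r_ab: (remove_edge e x y a b); first by rewrite (side_closed a_in r_ab).
  move: r_ab; rewrite /remove_edge e_ab /= => /negbFE /orP [] /andP [_ /eqP->].
    by rewrite side_refl orbT.
  by rewrite side_refl.
case r_ab: (remove_edge e y x a b); first by rewrite (side_closed a_in r_ab) orbT.
move: r_ab; rewrite /remove_edge e_ab /= => /negbFE /orP [] /andP [_ /eqP->].
  by rewrite side_refl.
by rewrite side_refl orbT.
Qed.

Lemma side_disjoint x y w : e x y -> w \in side e x y -> w \notin side e y x.
Proof.
move=> e_xy; rewrite !inE => x_w; apply: contra (remove_edge_disconnects e_xy) => y_w.
apply: connect_trans x_w _; rewrite (sym_connect_sym (@remove_edge_sym x y)).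
by rewrite (eq_connect (@remove_edgeC _ _ x y)).
Qed.

Lemma notin_side_nbr y z : e y z -> y \notin side e z y.
Proof. by move=> e_yz; rewrite inE; apply: remove_edge_disconnects; rewrite e_sym. Qed.

Lemma side_nbr_sub x y z : e y z -> z != x -> {subset side e z y <= side e y x}.
Proof.
move=> e_yz z_x w w_in; have e_zy : e z y by rewrite e_sym.
rewrite inE (eq_connect (@remove_edgeC _ _ y x)).
apply: connect_trans (connect1 _)
  (connect_avoiding_remove_edge x (side_connect_avoiding e_zy w_in)).
rewrite /remove_edge e_yz eqxx (negbTE z_x) orbF /=.
by apply: contra z_x => /andP [/eqP <- /eqP ->].
Qed.

Lemma side_nbr_inj y z1 z2 w : e y z1 -> e y z2 ->
  w \in side e z1 y -> w \in side e z2 y -> z1 = z2.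
Proof.
move=> e_yz1 e_yz2 w_in1 w_in2; apply/eqP; apply: contraT => z12.
have e_z1y : e z1 y by rewrite e_sym.
have avoiding_sym : connect_sym (avoiding y).
  by apply: sym_connect_sym => a b; rewrite /= [e a b]e_sym [(a != y) && _]andbC.
have z1_z2 : connect (avoiding y) z1 z2.
  apply: connect_trans (side_connect_avoiding e_z1y w_in1) _.
  by rewrite avoiding_sym; apply: side_connect_avoiding w_in2; rewrite e_sym.
case/negP: (remove_edge_disconnects e_z1y).
apply: connect_trans (connect_avoiding_remove_edge z1 z1_z2) (connect1 _).
rewrite /remove_edge (e_sym z2) e_yz2 /= eqxx eq_sym (negbTE z12) /=.
by apply: contraT => /negPn /andP [/eqP eq_z2y _]; move: e_yz2; rewrite eq_z2y e_irr.
Qed.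

Lemma side_decomp x y w : e y x -> w \in side e y x -> w != y ->
  exists2 z, (e y z) && (z != x) & w \in side e z y.
Proof.
move=> e_yx; rewrite inE; apply: (connect_forward_ind (P := fun w => w != y ->
  exists2 z, (e y z) && (z != x) & w \in side e z y)); last by rewrite eqxx.
move=> a b IHa r_ab b_y; case: (eqVneq a y) => [eq_ay | a_y].
  subst a; exists b; last exact: side_refl.
  move: r_ab; rewrite /remove_edge eqxx /= => /andP [-> ].
  by apply: contra => /eqP ->; rewrite eqxx.
have [z z_nbr a_in] := IHa a_y; exists z => //; apply: side_closed a_in _.
by apply: avoiding_sub_remove_edge; rewrite /= a_y b_y (remove_edge_sub r_ab).
Qed.

Lemma side_card_lt x y z : e y z -> z != x -> (#|side e z y| < #|side e y x|)%N.
Proof.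
move=> e_yz z_x; apply: proper_card; apply/properP; split.
  by apply/subsetP; apply: side_nbr_sub.
by exists y; [exact: side_refl | exact: notin_side_nbr].
Qed.

Variable ft : T -> nat.

Definition excess (f : T -> nat) w : int := (f w == 1%N)%:Z - (ft w == 1%N)%:Z.

Definition surplus f x y : int := \sum_(w in side e x y) excess f w.

Lemma diffe_surplus f x y : diffe e ft f x y = `|surplus f x y|%N.
Proof. by rewrite /diffe distn_subn !ones_sum /surplus /excess sumrB. Qed.

Lemma surplusN f x y :
  ones f [set: T] = ones ft [set: T] -> e x y -> surplus f x y = - surplus f y x.
Proof.
move=> same_ones e_xy; apply/eqP; rewrite -subr_eq0 opprK; apply/eqP.
have <- : \sum_w excess f w = 0.
  apply/eqP; rewrite /excess sumrB subr_eq0; apply/eqP.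
  by move: (congr1 Posz same_ones); rewrite !ones_sum !(eq_bigl _ _ (@in_setT T)).
rewrite (bigID (mem (side e x y))) /=; congr (_ + _); apply: eq_bigl => w.
have := side_cover w e_xy; have := @side_disjoint x y w e_xy.
by case: (w \in side e x y); case: (w \in side e y x) => //= ->.
Qed.

Lemma diffeC f x y :
  ones f [set: T] = ones ft [set: T] -> e x y -> diffe e ft f x y = diffe e ft f y x.
Proof.
by move=> same_ones e_xy; rewrite !diffe_surplus (surplusN same_ones e_xy) abszN.
Qed.

Lemma surplus_decomp f x y : e y x ->
  surplus f y x = excess f y + \sum_(z | e y z && (z != x)) surplus f z y.
Proof.
move=> e_yx; rewrite /surplus (bigD1 y) ?side_refl //=; congr (_ + _).
pose nbr w := odflt y [pick z | e y z && (z != x) && (w \in side e z y)].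
have nbrP w : (w \in side e y x) && (w != y) ->
    e y (nbr w) && (nbr w != x) && (w \in side e (nbr w) y).
  case/andP=> w_in w_y; rewrite /nbr; case: pickP => [z /= -> //|none].
  by have [z z_nbr w_z] := side_decomp e_yx w_in w_y; move: (none z); rewrite z_nbr w_z.
rewrite (partition_big nbr (fun z => e y z && (z != x))); last first.
  by move=> w /nbrP /andP [].
apply: eq_bigr => z /andP [e_yz z_x]; apply: eq_bigl => w; apply/idP/idP.
  by case/andP => /nbrP /andP [_ w_nbr] /eqP <-.
move=> w_z; have w_in := side_nbr_sub e_yz z_x w_z.
have w_y : w != y by apply: contraTneq w_z => ->; apply: notin_side_nbr.
have w_P : (w \in side e y x) && (w != y) by rewrite w_in w_y.
rewrite w_P /=; case/andP: (nbrP w w_P) => /andP [e_y_nbr _] w_nbr.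
by apply/eqP; apply: side_nbr_inj e_y_nbr e_yz w_nbr w_z.
Qed.

Lemma excess_swap f u v w : f u = 1%N -> f v != 1%N -> u != v ->
  excess (swap f u v) w = excess f w - (w == u)%:Z + (w == v)%:Z.
Proof.
move=> fu fv u_v; rewrite /excess /swap.
case: (eqVneq w u) => [->|w_u].
  by rewrite (negbTE u_v) fu (negbTE fv) eqxx addr0 addrAC.
case: (eqVneq w v) => [->|w_v]; last by rewrite subr0 addr0.
by rewrite fu eqxx (negbTE fv) subr0 addrAC.
Qed.

Lemma surplus_swap f u v a b : f u = 1%N -> f v != 1%N -> u != v ->
  surplus (swap f u v) a b =
  surplus f a b - (u \in side e a b)%:Z + (v \in side e a b)%:Z.
Proof.
move=> fu fv u_v; rewrite /surplus; under eq_bigr do rewrite excess_swap //.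
by rewrite big_split sumrB /= !sum_indicator.
Qed.

Definition edge_key (u v : T) : T * T :=
  if (enum_rank u < enum_rank v)%N then (u, v) else (v, u).

Definition Dsum_index (p : T * T) := e p.1 p.2 && (enum_rank p.1 < enum_rank p.2)%N.

Lemma Dsum_index_edge_key u v : e u v -> Dsum_index (edge_key u v).
Proof.
move=> e_uv; have ranks_neq : enum_rank u != enum_rank v.
  by apply: contraTneq e_uv => /enum_rank_inj ->; rewrite e_irr.
rewrite /Dsum_index /edge_key; case: ltnP => [-> | le_vu] /=; first by rewrite e_uv.
by rewrite -e_sym e_uv ltn_neqAle le_vu eq_sym ranks_neq.
Qed.

Lemma diffe_edge_key g u v : ones g [set: T] = ones ft [set: T] -> e u v ->
  diffe e ft g (edge_key u v).1 (edge_key u v).2 = diffe e ft g u v.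
Proof.
by move=> same_ones e_uv; rewrite /edge_key; case: ifP => //= _; rewrite diffeC // e_sym.
Qed.

Lemma remove_edge_other_key u v p : e u v -> Dsum_index p -> p != edge_key u v ->
  remove_edge e p.1 p.2 u v.
Proof.
case: p => a b e_uv /andP [_ /= lt_ab] p_key; rewrite /remove_edge e_uv /=.
apply: contra p_key => /orP [] /andP [/eqP eq_a /eqP eq_b];
  subst a b; rewrite /edge_key /=; first by rewrite lt_ab.
by rewrite ltnNge (ltnW lt_ab).
Qed.

Section Descent.
Variable f : T -> nat.
Hypothesis same_ones : ones f [set: T] = ones ft [set: T].

Lemma surplus_gt0_from_one x y : e x y -> 0 < surplus f x y ->
  exists a b, [/\ e a b, f a = 1%N & 0 < surplus f a b].
Proof.
have [n] := ubnP #|side e x y|; elim: n x y => // n IHn x y lt_side e_xy pos.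
have [fx | fx] := eqVneq (f x) 1%N; first by exists x, y.
have excess_le0 : excess f x <= 0 by rewrite /excess (negbTE fx) sub0r oppr_le0.
have : 0 < \sum_(z | e x z && (z != y)) surplus f z x.
  by apply: lt_le_trans pos _; rewrite (surplus_decomp f e_xy) gerDr.
case/sumr_gt0_exists => z /andP [e_xz z_y] pos_z.
have e_zx : e z x by rewrite e_sym.
exact: (IHn z x (leq_trans (side_card_lt e_xz z_y) lt_side) e_zx pos_z).
Qed.

Lemma surplus_gt0_one_to_other x y : e x y -> f x = 1%N -> 0 < surplus f x y ->
  exists u v, [/\ e u v, f u = 1%N, f v != 1%N & 0 < surplus f u v].
Proof.
have [n] := ubnP #|side e y x|; elim: n x y => // n IHn x y lt_side e_xy fx pos.
have [fy | fy] := eqVneq (f y) 1%N; last by exists x, y.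
have excess_ge0 : 0 <= excess f y.
  by rewrite /excess fy eqxx subr_ge0; case: (ft y == 1%N).
have e_yx : e y x by rewrite e_sym.
have : 0 < \sum_(z | e y z && (z != x)) - surplus f z y.
  rewrite sumrN oppr_gt0; apply: le_lt_trans (_ : surplus f y x < 0).
    by rewrite (surplus_decomp f e_yx) lerDr.
  by rewrite (surplusN same_ones e_yx) oppr_lt0.
case/sumr_gt0_exists => z /andP [e_yz z_x]; rewrite oppr_gt0 => neg_z.
apply: (IHn y z (leq_trans (side_card_lt e_yz z_x) lt_side) e_yz fy).
by rewrite (surplusN same_ones e_yz) oppr_gt0.
Qed.

Lemma Dsum_neq0_surplus_gt0 :
  Dsum e ft f != 0%N -> exists x y, e x y /\ 0 < surplus f x y.
Proof.
rewrite /Dsum sum_nat_eq0 negb_forall => /existsP [[a b]] /=.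
rewrite negb_imply diffe_surplus absz_eq0 => /andP [/andP [e_ab _] neq0].
case: (ltgtP (surplus f a b) 0) neq0 => // [neg | pos] _; last by exists a, b.
have e_ba : e b a by rewrite e_sym.
by exists b, a; rewrite (surplusN same_ones e_ba) oppr_gt0.
Qed.

Lemma Dsum_swap u v : e u v -> f u = 1%N -> f v != 1%N -> 0 < surplus f u v ->
  (Dsum e ft (swap f u v)).+1 = Dsum e ft f.
Proof.
move=> e_uv fu fv pos; have u_v : u != v by apply: contraTneq e_uv => ->; rewrite e_irr.
have e_vu : e v u by rewrite e_sym.
have key_in := Dsum_index_edge_key e_uv.
rewrite /Dsum -/Dsum_index (bigD1 _ key_in) [RHS](bigD1 _ key_in) /= -addSn.
congr addn.
  rewrite !diffe_edge_key ?ones_swap // !diffe_surplus surplus_swap //.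
  rewrite side_refl (negbTE (side_disjoint e_vu (side_refl v u))).
  by rewrite addr0 gtz0_abszB1.
apply: eq_bigr => p /andP [p_in p_key].
rewrite !diffe_surplus surplus_swap //.
by rewrite (side_same (remove_edge_other_key e_uv p_in p_key)) subrK.
Qed.

End Descent.

End Tree.

Theorem mainTheorem8 (T : finType) (e : rel T) (ft f : T -> nat) :
  is_tree e ->
  token_placement ft ->
  token_placement f ->
  ones f [set: T] = ones ft [set: T] ->
  Dsum e ft f <> 0%N ->
  exists u v : T, e u v /\ (Dsum e ft (swap f u v)).+1 = Dsum e ft f.
Proof.
move=> [[e_sym e_irr] e_conn e_acyclic] _ _ same_ones /eqP Dsum_neq0.
have [x [y [e_xy pos_xy]]] :=
  Dsum_neq0_surplus_gt0 e_sym e_irr e_conn e_acyclic same_ones Dsum_neq0.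
have [a [b [e_ab fa pos_ab]]] := surplus_gt0_from_one e_sym e_irr e_acyclic e_xy pos_xy.
have [u [v [e_uv fu fv pos_uv]]] :=
  surplus_gt0_one_to_other e_sym e_irr e_conn e_acyclic same_ones e_ab fa pos_ab.
exists u, v; split => //.
exact: (Dsum_swap e_sym e_irr e_conn e_acyclic same_ones e_uv fu fv pos_uv).
Qed.
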